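(* Let $\mathscr C$ be a finite skeletal locally trivial category and $k$ a field. Then $Q(k\mathscr C)=Q(\mathscr C)$; that is, $Q(k\mathscr C)$ has vertex set $\mathscr C^0$ and the set of arrows from $c$ to $d$ is $\mathrm{Irr}_{\mathscr C}(c,d)$.
   Context: $\mathscr C^0$ is the set of objects. $\mathscr C$ is locally trivial if each endomorphism monoid $\mathscr C(c,c)$ is trivial; skeletal if distinct objects are non-isomorphic. The category algebra $k\mathscr C$ has basis the arrows, product composition when defined and $0$ otherwise; the simple module at $c$ is one-dimensional. A morphism is irreducible if it is neither a split monomorphism nor a split epimorphism and whenever it factors as $gh$, either $h$ is a split monomorphism or $g$ is a split epimorphism; $\mathrm{Irr}_{\mathscr C}(c,d)$ is the set of irreducible morphisms $c\to d$. $Q(\mathscr C)$ has vertices the objects and arrows the irreducible morphisms. $Q(k\mathscr C)$ has $\dim\mathrm{Ext}^1(S,T)$ arrows from $S$ to $T$. *)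

From HB Require Import structures.
From mathcomp Require Import all_boot all_algebra.
Set Implicit Arguments. Unset Strict Implicit. Unset Printing Implicit Defensive.
Import GRing.Theory.
Local Open Scope ring_scope.

(* A finite (small) category: finite sets of objects and arrows.  [comp g f]
   is the composite g o f; it is only meaningful when [dom g = cod f]. *)
Record fincat := FinCat {
  obj : finType;
  arr : finType;
  dom : arr -> obj;
  cod : arr -> obj;
  idm : obj -> arr;
  comp : arr -> arr -> arr;
  dom_idm : forall c, dom (idm c) = c;
  cod_idm : forall c, cod (idm c) = c;
  dom_comp : forall g f, dom g = cod f -> dom (comp g f) = dom f;
  cod_comp : forall g f, dom g = cod f -> cod (comp g f) = cod g;
  comp_idl : forall f, comp (idm (cod f)) f = f;
  comp_idr : forall f, comp f (idm (dom f)) = f;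
  compA : forall h g f, dom h = cod g -> dom g = cod f ->
            comp h (comp g f) = comp (comp h g) f
}.

Section Cat.
Variable C : fincat.

Definition iso_obj (c d : obj C) : Prop :=
  exists f g : arr C, [/\ dom f = c, cod f = d, dom g = d, cod g = c &
                        comp g f = idm c /\ comp f g = idm d].

Definition skeletal : Prop := forall c d : obj C, iso_obj c d -> c = d.

Definition locally_trivial : Prop :=
  forall f : arr C, dom f = cod f -> f = idm (dom f).

Definition split_mono (f : arr C) : bool :=
  [exists r : arr C, [&& dom r == cod f, cod r == dom f & comp r f == idm (dom f)]].

Definition split_epi (f : arr C) : bool :=
  [exists s : arr C, [&& dom s == cod f, cod s == dom f & comp f s == idm (cod f)]].

Definition irreducible (f : arr C) : bool :=
  [&& ~~ split_mono f, ~~ split_epi f &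
   [forall g : arr C, forall h : arr C,
      ((dom g == cod h) && (comp g h == f)) ==> (split_mono h || split_epi g)]].

Definition Irr (c d : obj C) : {set arr C} :=
  [set f | [&& irreducible f, dom f == c & cod f == d]].

(* Left modules over the category algebra kC (basis = arrows, g.f = g o f if
   dom g = cod f and 0 otherwise, unit = sum of identities), given as matrix
   representations on k^n: an arrow a acts on column vectors by [rho a]. *)
Variable k : fieldType.

Definition is_kC_module (n : nat) (rho : arr C -> 'M[k]_n) : Prop :=
  (forall g f : arr C,
     rho g *m rho f = if dom g == cod f then rho (comp g f) else 0) /\
  \sum_(c : obj C) rho (idm c) = 1%:M.

Definition simple_mod (c : obj C) : arr C -> 'M[k]_1 :=
  fun a => if a == idm c then 1%:M else 0.

(* Ext^1_{kC}(M, N), computed via extensions 0 -> N -> E -> M -> 0: over a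
   field every such E is N (+) M as a vector space, with action
   a |-> [[rhoN a, delta a], [0, rhoM a]]; these are exactly the "cocycles"
   delta (module axioms for E), and equivalent extensions differ by the
   coboundaries a |-> rhoN a * phi - phi * rhoM a. *)
Definition cocycle_defect (m n : nat) (rhoM : arr C -> 'M[k]_m)
    (rhoN : arr C -> 'M[k]_n) (delta : {ffun arr C -> 'M[k]_(n, m)}) :
    {ffun (arr C * arr C) -> 'M[k]_(n, m)} * 'M[k]_(n, m) :=
  ([ffun p : arr C * arr C =>
      rhoN p.1 *m delta p.2 + delta p.1 *m rhoM p.2
      - (if dom p.1 == cod p.2 then delta (comp p.1 p.2) else 0)],
   \sum_(c : obj C) delta (idm c)).

Definition coboundary (m n : nat) (rhoM : arr C -> 'M[k]_m)
    (rhoN : arr C -> 'M[k]_n) (phi : 'M[k]_(n, m)) :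
    {ffun arr C -> 'M[k]_(n, m)} :=
  [ffun a => rhoN a *m phi - phi *m rhoM a].

Definition Z1 m n rhoM rhoN : {vspace {ffun arr C -> 'M[k]_(n, m)}} :=
  lker (linfun (@cocycle_defect m n rhoM rhoN)).

Definition B1 m n rhoM rhoN : {vspace {ffun arr C -> 'M[k]_(n, m)}} :=
  limg (linfun (@coboundary m n rhoM rhoN)).

Definition dimExt1 m n (rhoM : arr C -> 'M[k]_m) (rhoN : arr C -> 'M[k]_n) : nat :=
  (\dim (Z1 rhoM rhoN) - \dim (B1 rhoM rhoN))%N.

End Cat.

(* In a skeletal locally trivial category a composite r f can only be an
   identity when r and f both are; so the split monomorphisms and split
   epimorphisms are exactly the identities, and an arrow is irreducible iff it
   is not an identity and every factorisation of it has an identity factor.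
   For the simple modules S_c, S_d a 1-cocycle D vanishes on every composite
   of two non-identities; once the coboundary fixing its value at idm d is
   subtracted it also vanishes on identities, hence is supported on
   Irr(c, d).  Conversely the indicator of any irreducible arrow c -> d is a
   cocycle, and coboundaries live on identities, so
   Z^1 = B^1 (+) span {delta_a | a in Irr(c, d)}. *)
From HB Require Import structures.
From Pilot Require Import Defs.
From mathcomp Require Import all_boot all_algebra.
Set Implicit Arguments. Unset Strict Implicit. Unset Printing Implicit Defensive.
Import GRing.Theory.
Local Open Scope ring_scope.

Section Cohomology.
Variables (C : fincat) (k : fieldType) (m n : nat).
Variables (rhoM : arr C -> 'M[k]_m) (rhoN : arr C -> 'M[k]_n).

Lemma cocycle_defect_is_linear : linear (@cocycle_defect C k m n rhoM rhoN).
Proof.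
have addrACB (V : zmodType) (p q r s t u : V) :
    p + q + (r + s) - (t + u) = p + r - t + (q + s - u).
  by rewrite opprD (addrACA p q) (addrACA (p + r)).
move=> a x y; rewrite /cocycle_defect; congr (_, _).
  apply/ffunP => p; rewrite !ffunE mulmxDr mulmxDl -scalemxAr -scalemxAl.
  case: ifP => _; last by rewrite !subr0 scalerDr addrACA.
  by rewrite addrACB scalerBr scalerDr.
rewrite /= scaler_sumr -big_split /=; apply: eq_bigr => i _.
by rewrite !ffunE.
Qed.

HB.instance Definition _ := GRing.isLinear.Build k _ _ _
  (@cocycle_defect C k m n rhoM rhoN) cocycle_defect_is_linear.

Lemma coboundary_is_linear : linear (@coboundary C k m n rhoM rhoN).
Proof.
move=> a x y; apply/ffunP => b; rewrite !ffunE mulmxDr mulmxDl.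
by rewrite -scalemxAr -scalemxAl opprD addrACA scalerBr.
Qed.

HB.instance Definition _ := GRing.isLinear.Build k _ _ _
  (@coboundary C k m n rhoM rhoN) coboundary_is_linear.

Lemma Z1P (D : {ffun arr C -> 'M[k]_(n, m)}) :
  reflect ((forall a b, rhoN a *m D b + D a *m rhoM b =
             if dom a == cod b then D (Defs.comp a b) else 0) /\
           \sum_x D (idm x) = 0)
          (D \in Z1 rhoM rhoN).
Proof.
rewrite memv_ker lfunE; apply: (iffP eqP) => [DZ | [DZ1 DZ2]].
  split; last exact: (congr1 (fun q : _ * _ => q.2) DZ).
  move=> a b; have := congr1 (fun q : {ffun _ -> _} * _ => q.1 (a, b)) DZ.
  by rewrite /= !ffunE => /eqP; rewrite subr_eq0 => /eqP.
rewrite /= /cocycle_defect DZ2; congr (_, _).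
by apply/ffunP => p; rewrite !ffunE DZ1 subrr.
Qed.

Lemma B1_sub_Z1 : is_kC_module rhoM -> is_kC_module rhoN ->
  (B1 rhoM rhoN <= Z1 rhoM rhoN)%VS.
Proof.
move=> [mulM sumM] [mulN sumN]; apply/subvP => _ /memv_imgP[phi _ ->].
rewrite lfunE; apply/Z1P; split.
  move=> a b; rewrite !ffunE mulmxBr mulmxBl !mulmxA addrA subrK.
  rewrite -(mulmxA phi) mulM mulN.
  by case: ifP => _; rewrite ?mul0mx ?mulmx0 ?subrr.
under eq_bigr do rewrite ffunE.
by rewrite sumrB -mulmx_suml -mulmx_sumr sumM sumN mul1mx mulmx1 subrr.
Qed.

Lemma dimExt1_complement (E : {vspace {ffun arr C -> 'M[k]_(n, m)}}) :
  Z1 rhoM rhoN = (B1 rhoM rhoN + E)%VS -> (B1 rhoM rhoN :&: E = 0)%VS ->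
  dimExt1 rhoM rhoN = \dim E.
Proof. by rewrite /dimExt1 => -> /dimv_disjoint_sum ->; rewrite addKn. Qed.

End Cohomology.

Section Deltas.
Variables (T : finType) (k : fieldType).

Definition delta_ffun (a : T) : {ffun T -> 'M[k]_1} :=
  [ffun x => if x == a then 1%:M else 0].

Lemma span_vanish (X : seq {ffun T -> 'M[k]_1}) x :
  (forall v, v \in X -> v x = 0) -> forall w, w \in <<X>>%VS -> w x = 0.
Proof.
move=> X0 w wX; rewrite (coord_span (X := in_tuple X) wX) sum_ffunE.
rewrite big1 // => i _.
by rewrite ffunE X0 ?scaler0 // mem_nth.
Qed.

Lemma delta_ffun_free (s : seq T) : uniq s -> free (map delta_ffun s).
Proof.
elim: s => [|a s IHs] /=; first by rewrite nil_free.
case/andP => a_notin_s /IHs free_s; rewrite free_cons free_s andbT.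
apply/negP => /(span_vanish (x := a)) delta_a0.
have /eqP : delta_ffun a a = 0.
  apply: delta_a0 => _ /mapP[b bs ->]; rewrite ffunE.
  by case: eqP => // ab; rewrite ab bs in a_notin_s.
by rewrite ffunE eqxx (negbTE (oner_neq0 _)).
Qed.

Lemma span_delta_vanish (A : {set T}) w x :
  w \in <<map delta_ffun (enum A)>>%VS -> x \notin A -> w x = 0.
Proof.
move=> wA xA; apply: span_vanish wA => _ /mapP[a aA ->].
by rewrite ffunE; case: eqP => // xa; rewrite xa -mem_enum aA in xA.
Qed.

Lemma mem_span_delta (A : {set T}) (D : {ffun T -> 'M[k]_1}) :
  (forall x, D x != 0 -> x \in A) -> D \in <<map delta_ffun (enum A)>>%VS.
Proof.
move=> suppD; have -> : D = \sum_(a in A) D a 0 0 *: delta_ffun a.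
  apply/ffunP => x; rewrite sum_ffunE.
  have [xA | xA] := boolP (x \in A).
    rewrite (bigD1 x) //= big1 ?addr0 => [|a /andP[_ nxa]].
      by rewrite !ffunE eqxx scalemx1 -mx11_scalar.
    by rewrite !ffunE eq_sym (negbTE nxa) scaler0.
  rewrite big1 => [|a aA]; last first.
    by rewrite !ffunE; case: eqP => [xa | _]; [rewrite xa aA in xA | rewrite scaler0].
  by apply/eqP; apply: contraNT xA; apply: suppD.
apply: memv_suml => a aA; apply/memvZ/memv_span.
by rewrite map_f ?mem_enum.
Qed.

End Deltas.

Section Category.
Variable C : fincat.

Lemma idm_inj : injective (@idm C).
Proof. by move=> x y e; rewrite -(dom_idm x) e dom_idm. Qed.

Lemma comp_idm_idm (x : obj C) : Defs.comp (idm x) (idm x) = idm x.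
Proof. by have := comp_idl (idm x); rewrite cod_idm. Qed.

Lemma idm_split_mono (x : obj C) : split_mono (idm x).
Proof. by apply/existsP; exists (idm x); rewrite dom_idm cod_idm comp_idm_idm !eqxx. Qed.

Lemma idm_split_epi (x : obj C) : split_epi (idm x).
Proof. by apply/existsP; exists (idm x); rewrite dom_idm cod_idm comp_idm_idm !eqxx. Qed.

Hypotheses (C_skeletal : skeletal C) (C_loc_trivial : locally_trivial C).

(* r f = 1 and f r is an endomorphism, hence 1: f is an isomorphism, so
   dom f = cod f by skeletality and both arrows are endomorphisms. *)
Lemma retraction_idm (r f : arr C) : dom r = cod f ->
  Defs.comp r f = idm (dom f) -> f = idm (dom f) /\ r = idm (dom r).
Proof.
move=> drf rf.
have dfr : dom f = cod r by rewrite -(cod_comp drf) rf cod_idm.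
have loop_fr : dom (Defs.comp f r) = cod (Defs.comp f r).
  by rewrite (dom_comp dfr) (cod_comp dfr).
have fr : Defs.comp f r = idm (cod f).
  by rewrite (C_loc_trivial loop_fr) (dom_comp dfr) drf.
have dcf : dom f = cod f by apply: C_skeletal; exists f, r.
by split; apply: C_loc_trivial; rewrite // drf -dcf.
Qed.

Lemma comp_eq_idm (g f : arr C) (x : obj C) : dom g = cod f ->
  (Defs.comp g f == idm x) = (g == idm x) && (f == idm x).
Proof.
move=> dgf; apply/eqP/andP => [gfx | [/eqP-> /eqP->]]; last exact: comp_idm_idm.
have dfx : dom f = x by rewrite -(dom_comp dgf) gfx dom_idm.
have [ef eg] := retraction_idm dgf (etrans gfx (congr1 _ (esym dfx))).
by rewrite eg dgf ef cod_idm dfx.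
Qed.

Lemma split_monoE (f : arr C) : split_mono f = (f == idm (dom f)).
Proof.
apply/idP/eqP => [/existsP[r /and3P[/eqP drf _ /eqP rf]] | ->].
  by case: (retraction_idm drf rf).
exact: idm_split_mono.
Qed.

Lemma split_epiE (f : arr C) : split_epi f = (f == idm (dom f)).
Proof.
apply/idP/eqP => [/existsP[s /and3P[/eqP dsf /eqP csf /eqP fs]] | ->].
  by case: (@retraction_idm f s (esym csf)); rewrite ?dsf.
exact: idm_split_epi.
Qed.

Lemma irreducibleP (a : arr C) :
  reflect (a != idm (dom a) /\
           forall g h, dom g = cod h -> Defs.comp g h = a ->
             h = idm (dom h) \/ g = idm (dom g))
          (irreducible a).
Proof.
rewrite /irreducible split_monoE split_epiE andbA andbb.
apply: (iffP andP) => [[na /forallP factor_a] | [na factor_a]]; split=> //.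
  move=> g h dgh gha; have /implyP := forallP (factor_a g) h.
  rewrite {1}dgh gha !eqxx split_monoE split_epiE => /(_ isT).
  by case/orP => /eqP; [left | right].
apply/forallP => g; apply/forallP => h; apply/implyP => /andP[/eqP dgh /eqP gha].
rewrite split_monoE split_epiE.
by case: (factor_a g h dgh gha) => /eqP ->; rewrite ?orbT.
Qed.

Lemma irreducible_neq_idm (a : arr C) (x : obj C) : irreducible a -> a != idm x.
Proof.
case/irreducibleP => na _; apply: contra na => /eqP ax.
by rewrite {2}ax dom_idm ax.
Qed.

Lemma comp_eq_irreducible (a g h : arr C) : irreducible a -> dom g = cod h ->
  (Defs.comp g h == a) =
  (g == idm (cod a)) && (h == a) || (g == a) && (h == idm (dom a)).
Proof.
move=> /irreducibleP[_ factor_a] dgh; apply/eqP/idP => [gha | ].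
  have [eh | eg] := factor_a g h dgh gha.
    have dhg : dom h = dom g by rewrite dgh {2}eh cod_idm.
    have ga : g = a by rewrite -gha eh dhg comp_idr.
    by apply/orP; right; rewrite -ga -dhg eqxx; apply/eqP.
  have ha : h = a by rewrite -gha eg dgh comp_idl.
  by apply/orP; left; rewrite -ha -dgh eqxx andbT; apply/eqP.
by case/orP => /andP[/eqP-> /eqP->]; [exact: comp_idl | exact: comp_idr].
Qed.

Variable k : fieldType.
Local Notation rho := (@simple_mod C k).

Lemma simple_mod_idm (x y : obj C) : rho y (idm x) = if x == y then 1%:M else 0.
Proof. by rewrite /simple_mod (inj_eq idm_inj). Qed.

Lemma simple_mod_nonid (y : obj C) (a : arr C) : a != idm (dom a) -> rho y a = 0.
Proof.
move=> na; rewrite /simple_mod; case: eqP => // ay.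
by rewrite {2}ay dom_idm -ay eqxx in na.
Qed.

Lemma simple_module (x : obj C) : is_kC_module (rho x).
Proof.
split=> [g f|]; last first.
  rewrite (bigD1 x) //= simple_mod_idm eqxx big1 ?addr0 // => y /negbTE yx.
  by rewrite simple_mod_idm yx.
rewrite /simple_mod; case: (eqVneq g (idm x)) => [-> | ng]; last first.
  by rewrite mul0mx; case: ifP => // /eqP dgf; rewrite comp_eq_idm // (negbTE ng).
case: (eqVneq f (idm x)) => [-> | nf]; last first.
  by rewrite mulmx0; case: ifP => // /eqP dgf; rewrite comp_eq_idm // (negbTE nf) andbF.
by rewrite dom_idm cod_idm comp_idm_idm !eqxx mulmx1.
Qed.

Section SimpleCocycles.
Variables c d : obj C.

Lemma delta_Z1 (a : arr C) :
  a \in Irr c d -> delta_ffun k a \in Z1 (rho c) (rho d).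
Proof.
rewrite inE => /and3P[ir /eqP da /eqP ca]; apply/Z1P; split; last first.
  by rewrite big1 // => x _; rewrite ffunE eq_sym (negbTE (irreducible_neq_idm x ir)).
have [nda nac] : idm d != a /\ a != idm c.
  by rewrite eq_sym !irreducible_neq_idm.
move=> g h; rewrite !ffunE /simple_mod.
case: (boolP (dom g == cod h)) => [/eqP dgh | ndgh].
  rewrite comp_eq_irreducible // ca da.
  case: (g =P idm d) => [-> | _]; case: (h =P a) => [-> | _];
    rewrite ?(negbTE nda) ?(negbTE nac) ?eqxx
            ?mul1mx ?mulmx0 ?mul0mx ?add0r ?addr0 ?andbF //=.
  by case: (g == a); case: (h == idm c); rewrite /= ?mul1mx ?mul0mx.
rewrite -[RHS](addr0 0); congr (_ + _).
  case: (g =P idm d) => [gd | _]; last by rewrite mul0mx.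
  case: (h =P a) => [ha | _]; last by rewrite mulmx0.
  by rewrite gd ha dom_idm ca eqxx in ndgh.
case: (g =P a) => [ga | _]; last by rewrite mul0mx.
case: (h =P idm c) => [hc | _]; last by rewrite mulmx0.
by rewrite ga hc cod_idm da eqxx in ndgh.
Qed.

Lemma cocycle_idm_eq0 (D : {ffun arr C -> 'M[k]_1}) :
  D \in Z1 (rho c) (rho d) -> c = d \/ D (idm d) = 0 -> forall y, D (idm y) = 0.
Proof.
move=> /Z1P[DZ DZsum] Dd0.
have Didm y : rho d (idm y) *m D (idm y) + D (idm y) *m rho c (idm y) = D (idm y).
  by rewrite DZ dom_idm cod_idm eqxx comp_idm_idm.
have Dother y : y != c -> D (idm y) = 0.
  move=> yc; have := Didm y; rewrite !simple_mod_idm (negbTE yc) mulmx0 addr0.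
  case: eqP => [yd | _]; last by rewrite mul0mx.
  by case: Dd0 => [cd | <-]; [rewrite yd cd eqxx in yc | rewrite yd].
move=> y; have [-> | /Dother //] := eqVneq y c.
case: Dd0 => [cd | _].
  (* with c = d the cocycle identity at (idm c, idm c) reads 2 D = D *)
  move: (Didm c); rewrite !simple_mod_idm cd eqxx mul1mx mulmx1 => /eqP.
  by rewrite -subr_eq0 addrK => /eqP.
by move: DZsum; rewrite (bigD1 c) //= big1 ?addr0 // => y' /Dother.
Qed.

Lemma cocycle_supp_Irr (D : {ffun arr C -> 'M[k]_1}) :
  D \in Z1 (rho c) (rho d) -> (forall y, D (idm y) = 0) ->
  forall x, D x != 0 -> x \in Irr c d.
Proof.
move=> /Z1P[DZ _] Didm0 x Dx.
have nx : x != idm (dom x) by apply: contra Dx => /eqP->; rewrite Didm0.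
have cx : cod x = d.
  apply/eqP; apply: contraNT Dx => xd; have := DZ (idm (cod x)) x.
  by rewrite dom_idm eqxx comp_idl simple_mod_idm (negbTE xd) Didm0 !mul0mx addr0 => <-.
have dx : dom x = c.
  apply/eqP; apply: contraNT Dx => xc; have := DZ x (idm (dom x)).
  by rewrite cod_idm eqxx comp_idr simple_mod_idm (negbTE xc) Didm0 !mulmx0 addr0 => <-.
rewrite inE dx cx !eqxx !andbT; apply/irreducibleP; split=> // g h dgh ghx.
have [| nh] := eqVneq h (idm (dom h)); first by left.
have [| ng] := eqVneq g (idm (dom g)); first by right.
move: Dx; have := DZ g h; rewrite dgh eqxx ghx => <-.
by rewrite !simple_mod_nonid // mul0mx mulmx0 addr0 eqxx.
Qed.

Local Notation Irr_span := <<map (delta_ffun k) (enum (Irr c d))>>%VS.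

Lemma Z1_simple_decomposition :
  Z1 (rho c) (rho d) = (B1 (rho c) (rho d) + Irr_span)%VS.
Proof.
have B1Z1 := B1_sub_Z1 (simple_module c) (simple_module d).
apply/eqP; rewrite eqEsubv subv_add B1Z1 /=; apply/andP; split; last first.
  by apply/span_subvP => v /mapP[a]; rewrite mem_enum => aI ->; apply: delta_Z1.
apply/subvP => D DZ; set u := coboundary (rho c) (rho d) (D (idm d)).
have uB : u \in B1 (rho c) (rho d) by rewrite -[u]lfunE memv_img ?memvf.
have D'Z : D - u \in Z1 (rho c) (rho d) by rewrite memvB // (subvP B1Z1).
have D'd0 : c = d \/ (D - u) (idm d) = 0.
  have [-> | cd] := eqVneq c d; [by left | right].
  by rewrite !ffunE !simple_mod_idm eqxx eq_sym (negbTE cd) mul1mx mulmx0 subr0 subrr.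
have -> : D = u + (D - u) by rewrite addrC subrK.
apply: memv_add uB (mem_span_delta _).
exact: cocycle_supp_Irr D'Z (cocycle_idm_eq0 D'Z D'd0).
Qed.

Lemma B1_cap_Irr_span : (B1 (rho c) (rho d) :&: Irr_span = 0)%VS.
Proof.
apply/eqP; rewrite -subv0; apply/subvP => w.
rewrite memv_cap memv0 => /andP[/memv_imgP[phi _ ->] wE].
apply/eqP/ffunP => x; rewrite [RHS]ffunE.
have [xid | nx] := eqVneq x (idm (dom x)); last first.
  by rewrite lfunE ffunE !simple_mod_nonid // mulmx0 mul0mx subrr.
apply: span_delta_vanish wE _; rewrite inE xid; apply/and3P => -[irr_x _ _].
by have := irreducible_neq_idm (dom x) irr_x; rewrite -xid eqxx.
Qed.

Lemma dimExt1_simple : dimExt1 (rho c) (rho d) = #|Irr c d|.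
Proof.
rewrite (dimExt1_complement Z1_simple_decomposition B1_cap_Irr_span).
by rewrite (eqP (delta_ffun_free k (enum_uniq _))) size_map -cardE.
Qed.

End SimpleCocycles.
End Category.

Theorem mainTheorem8 (C : fincat) (k : fieldType) :
  skeletal C -> locally_trivial C ->
  (forall c : obj C, is_kC_module (@simple_mod C k c)) /\
  forall c d : obj C,
    dimExt1 (@simple_mod C k c) (@simple_mod C k d) = #|Irr c d|.
Proof.
move=> C_skeletal C_loc_trivial; split=> [c | c d].
  exact: simple_module.
exact: dimExt1_simple.
Qed.
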